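(* There is no well-behaved real-measure of $\mathbb N^{\mathbb N}$; that is, there is no function $F:\mathbb N^{\mathbb N}\to\mathbb R$ such that (1) for all $f,g:\mathbb N\to\mathbb N$, $f\succ g$ implies $F(f)>F(g)$, and (2) for every $r\in\mathbb R$ there is $f:\mathbb N\to\mathbb N$ with $F(f)>r$.
   Context: $\mathbb N^{\mathbb N}$ denotes the set of all functions $\mathbb N\to\mathbb N$. For $f,g:\mathbb N\to\mathbb N$, write $f\succ g$ if there is $n_0\in\mathbb N$ with $f(n)>g(n)$ for all $n>n_0$. *)

From Stdlib Require Import Reals.
Open Scope R_scope.

Definition eventually_dominates (f g : nat -> nat) : Prop :=
  exists n0 : nat, forall n : nat, (n > n0)%nat -> (f n > g n)%nat.

From Stdlib Require Import Reals Lia Lra ClassicalEpsilon.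
Open Scope R_scope.

(* Eventual domination on N^N is "countably directed": for any
   sequence of functions f_0, f_1, ... the diagonal majorant
     g(m) = 1 + f_0(m) + ... + f_m(m)
   eventually dominates every f_n (namely for m >= n).  Now suppose F were
   strictly monotone for domination and unbounded above.  Choosing f_n with
   F(f_n) > n, monotonicity gives F(g) > F(f_n) > n for every n, so F(g)
   exceeds every natural number, contradicting the Archimedean property. *)

Fixpoint diagonal_sum (fs : nat -> nat -> nat) (m k : nat) : nat :=
  match k with
  | O => fs O m
  | S k' => (diagonal_sum fs m k' + fs k m)%nat
  end.

Lemma diagonal_sum_ge (fs : nat -> nat -> nat) (m k j : nat) :
  (j <= k)%nat -> (fs j m <= diagonal_sum fs m k)%nat.
Proof.
  induction k as [|k IHk]; intros Hjk; simpl.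
  - replace j with O by lia; lia.
  - destruct (Nat.eq_dec j (S k)) as [->|Hne]; [lia|].
    specialize (IHk ltac:(lia)); lia.
Qed.

Definition diagonal_majorant (fs : nat -> nat -> nat) (m : nat) : nat :=
  S (diagonal_sum fs m m).

Lemma diagonal_majorant_dominates (fs : nat -> nat -> nat) (n : nat) :
  eventually_dominates (diagonal_majorant fs) (fs n).
Proof.
  exists n; intros m Hm; unfold diagonal_majorant.
  pose proof (diagonal_sum_ge fs m m n ltac:(lia)); lia.
Qed.

Theorem mainTheorem7 :
  ~ exists F : (nat -> nat) -> R,
      (forall f g : nat -> nat, eventually_dominates f g -> F f > F g) /\
      (forall r : R, exists f : nat -> nat, F f > r).
Proof.
  intros [F [Hmono Hunbounded]].
  destruct (choice (fun (n : nat) (f : nat -> nat) => F f > INR n)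
                   (fun n => Hunbounded (INR n))) as [fs Hfs].
  assert (Hg : forall n, F (diagonal_majorant fs) > INR n).
  { intro n; specialize (Hmono _ _ (diagonal_majorant_dominates fs n)).
    specialize (Hfs n); lra. }
  destruct (INR_unbounded (F (diagonal_majorant fs))) as [n Hn].
  specialize (Hg n); lra.
Qed.
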